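(* Let $(E,C)$ be a separated graph, $S\subseteq C_{fin}$, and $K$ a field. For each $X\in C$ let $A_X$ be the $K$-algebra defined in the context, let $A$ be the free product of the $K$-algebras $\{A_X\}_{X\in C}$, and let $I$ be the two-sided ideal of $A$ generated by $\{v_X-v_Y: X,Y\in C,\ v\in E^0\}$. Then $L_K(E,C,S)$ is $K$-isomorphic to the amalgamated free product $A/I$, via an isomorphism sending $e\mapsto[e]$, $e^*\mapsto[e^*]$ for $e\in E^1$ and $v\mapsto[v_X]$ for $v\in E^0$ (any $X\in C$).
   Context: A separated graph is a pair $(E,C)$ where $E=(E^0,E^1,r,s)$ is a directed graph and $C=\bigcup_{v\in E^0}C_v$, where for each non-sink $v$, $C_v$ is a partition of $s^{-1}(v)$ into pairwise disjoint nonempty sets; $C_{fin}$ is the set of finite $Y\in C$. The Cohn-Leavitt algebra $L_K(E,C,S)$ is the universal $K$-algebra generated by pairwise orthogonal idempotents $\{v:v\in E^0\}$ and elements $\{e,e^*:e\in E^1\}$ subject to: $s(e)e=er(e)=e$; $r(e)e^*=e^*s(e)=e^*$; $e^*f=\delta_{e,f}r(e)$ for $e,f\in Y$, $Y\in C$; $v=\sum_{e\in X}ee^*$ for every $X\in S\cap C_v$, $v$ non-sink. For $X\in C$, let $E_X^0=\{v_X:v\in E^0\}$ be a copy of $E^0$, and let $A_X$ be the universal $K$-algebra generated by $E_X^0\cup\{e,e^*:e\in X\}$ subject to: the elements of $E_X^0$ are pairwise orthogonal idempotents; $e\,r(e)_X=e=s(e)_X\,e$ and $r(e)_X e^*=e^*=e^*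 s(e)_X$ for $e\in X$; $e^*f=\delta_{e,f}r(e)_X$ for $e,f\in X$; and, if $X\in S$, $v_X=\sum_{e\in X}ee^*$ where $v$ is the common source of the edges in $X$ (i.e. $X\in C_v$). $[a]$ denotes the class in $A/I$ of $a\in A$. *)

From mathcomp Require Import all_boot all_algebra.
From Stdlib Require Import List.
Set Implicit Arguments. Unset Strict Implicit. Unset Printing Implicit Defensive.
Import GRing.Theory.
Local Open Scope ring_scope.

(* Not-necessarily-unital associative K-algebras. *)
Record nalg (K : fieldType) := NAlg {
  nalg_sort :> lmodType K;
  nmul : nalg_sort -> nalg_sort -> nalg_sort;
  nmulA : forall x y z, nmul x (nmul y z) = nmul (nmul x y) z;
  nmulDl : forall x y z, nmul (x + y) z = nmul x z + nmul y z;
  nmulDr : forall x y z, nmul x (y + z) = nmul x y + nmul x z;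
  nmulZl : forall (a : K) x y, nmul (a *: x) y = a *: nmul x y;
  nmulZr : forall (a : K) x y, nmul x (a *: y) = a *: nmul x y }.
Arguments nmul {K} n _ _.
Notation "x *n y" := (nmul _ x y) (at level 40, left associativity).

Section Defs.
Variable K : fieldType.

Definition is_morph (A B : nalg K) (f : A -> B) : Prop :=
  (forall (a : K) (x y : A), f (a *: x + y) = a *: f x + f y) /\
  (forall x y : A, f (x *n y) = f x *n f y).

Definition universal3 (V Ed : Type)
    (Rel : forall B : nalg K, (V -> B) -> (Ed -> B) -> (Ed -> B) -> Prop)
    (A : nalg K) (gv : V -> A) (ge gs : Ed -> A) : Prop :=
  Rel A gv ge gs /\
  forall (B : nalg K) (fv : V -> B) (fe fs : Ed -> B), Rel B fv fe fs ->
    exists phi : A -> B,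
      [/\ is_morph phi,
          (forall v, phi (gv v) = fv v),
          (forall e, phi (ge e) = fe e),
          (forall e, phi (gs e) = fs e) &
          forall psi : A -> B, is_morph psi ->
            (forall v, psi (gv v) = fv v) ->
            (forall e, psi (ge e) = fe e) ->
            (forall e, psi (gs e) = fs e) ->
            forall x, psi x = phi x].

Definition is_free_product (I : Type) (A : I -> nalg K) (P : nalg K)
    (iota : forall i, A i -> P) : Prop :=
  (forall i, is_morph (iota i)) /\
  forall (B : nalg K) (f : forall i, A i -> B), (forall i, is_morph (f i)) ->
    exists phi : P -> B,
      [/\ is_morph phi,
          (forall i x, phi (iota i x) = f i x) &
          forall psi : P -> B, is_morph psi ->
            (forall i x, psi (iota i x) = f i x) -> forall y, psi y = phi y].

Definition is_ideal (P : nalg K) (J : P -> Prop) : Prop :=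
  [/\ J 0, (forall x y, J x -> J y -> J (x + y)),
      (forall (a : K) x, J x -> J (a *: x)),
      (forall x y, J y -> J (x *n y)) &
      (forall x y, J x -> J (x *n y))].

Definition gen_ideal (P : nalg K) (T : P -> Prop) (x : P) : Prop :=
  forall J : P -> Prop, is_ideal J -> (forall t, T t -> J t) -> J x.

Definition is_quotient (P Q : nalg K) (pi : P -> Q) (J : P -> Prop) : Prop :=
  [/\ is_morph pi, (forall q, exists p, pi p = q) & (forall p, pi p = 0 <-> J p)].
End Defs.

(* Separated graphs: C is given as a partition of E^1 into classes indexed by
   Cl, each class X nonempty and contained in s^{-1}(clsrc X); so C_v is the
   set of classes with clsrc X = v. *)
Record sep_graph := SepGraph {
  V : Type; E : Type; Cl : Type;
  src : E -> V; rng : E -> V;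
  cls : E -> Cl; clsrc : Cl -> V;
  clsrcP : forall e, src e = clsrc (cls e);
  clsne : forall X : Cl, exists e, cls e = X }.

Section Rels.
Variables (K : fieldType) (G : sep_graph) (S : Cl G -> Prop).

Definition rel_L (B : nalg K) (gv : V G -> B) (ge gs : E G -> B) : Prop :=
  (forall v, gv v *n gv v = gv v) /\
  (forall v w, v <> w -> gv v *n gv w = 0) /\
  (forall e, gv (src e) *n ge e = ge e) /\
  (forall e, ge e *n gv (rng e) = ge e) /\
  (forall e, gv (rng e) *n gs e = gs e) /\
  (forall e, gs e *n gv (src e) = gs e) /\
  (forall e, gs e *n ge e = gv (rng e)) /\
  (forall e f, cls e = cls f -> e <> f -> gs e *n ge f = 0) /\
  (forall X, S X -> forall l : list (E G), NoDup l -> (forall e, In e l <-> cls e = X) ->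
     gv (clsrc X) = \sum_(e <- l) (ge e *n gs e)).

Definition rel_AX (X : Cl G) (B : nalg K) (gv : V G -> B)
    (ge gs : {e : E G | cls e = X} -> B) : Prop :=
  (forall v, gv v *n gv v = gv v) /\
  (forall v w, v <> w -> gv v *n gv w = 0) /\
  (forall e, ge e *n gv (rng (proj1_sig e)) = ge e) /\
  (forall e, gv (src (proj1_sig e)) *n ge e = ge e) /\
  (forall e, gv (rng (proj1_sig e)) *n gs e = gs e) /\
  (forall e, gs e *n gv (src (proj1_sig e)) = gs e) /\
  (forall e, gs e *n ge e = gv (rng (proj1_sig e))) /\
  (forall e f, e <> f -> gs e *n ge f = 0) /\
  (S X -> forall l : list {e : E G | cls e = X}, NoDup l -> (forall e, In e l) ->
     gv (clsrc X) = \sum_(e <- l) (ge e *n gs e)).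
End Rels.

(* The relations of A_X are exactly the relations of L_K(E,C,S) involving only the
   edges of X, with v_X in place of v. Hence the images of the A_X in A/I, where all
   copies v_X of a vertex are identified, satisfy the relations of L_K(E,C,S); and
   conversely the canonical maps A_X -> L_K(E,C,S) agree on the identified vertices,
   so they assemble to a map A -> L_K(E,C,S) vanishing on I. Both composites fix
   generators, so uniqueness in the universal properties makes them mutually inverse. *)
From mathcomp Require Import all_boot all_algebra.
From Stdlib Require Import List ClassicalEpsilon ChoiceFacts ProofIrrelevance
  FunctionalExtensionality.
Set Implicit Arguments. Unset Strict Implicit.
Import GRing.Theory.
Local Open Scope ring_scope.

Section Morphisms.
Variable K : fieldType.
Implicit Types A B C : nalg K.

Lemma morph_id A : is_morph (fun x : A => x).
Proof. by []. Qed.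

Lemma morph_comp A B C (f : A -> B) (g : B -> C) :
  is_morph f -> is_morph g -> is_morph (fun x => g (f x)).
Proof. by move=> [f1 f2] [g1 g2]; split=> *; rewrite ?f1 ?g1 ?f2 ?g2. Qed.

Lemma morphD A B (f : A -> B) : is_morph f -> forall x y, f (x + y) = f x + f y.
Proof. by move=> [hf _] x y; have := hf 1 x y; rewrite !scale1r. Qed.

Lemma morph0 A B (f : A -> B) : is_morph f -> f 0 = 0.
Proof. by move=> hf; apply: (addrI (f 0)); rewrite -(morphD hf) !addr0. Qed.

Lemma morphB A B (f : A -> B) : is_morph f -> forall x y, f (x - y) = f x - f y.
Proof. by move=> [hf _] x y; rewrite addrC [RHS]addrC -!scaleN1r hf. Qed.

Lemma morphZ A B (f : A -> B) : is_morph f -> forall a x, f (a *: x) = a *: f x.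
Proof. by move=> hf a x; have := hf.1 a x 0; rewrite !addr0 (morph0 hf) addr0. Qed.

Lemma morph_sum A B (f : A -> B) (I : Type) (l : list I) (F : I -> A) :
  is_morph f -> f (\sum_(i <- l) F i) = \sum_(i <- l) f (F i).
Proof.
move=> hf; elim: l => [|i l IH]; first by rewrite !big_nil (morph0 hf).
by rewrite !big_cons (morphD hf) IH.
Qed.

Lemma nmulr0 A (x : A) : x *n 0 = 0.
Proof. by have := nmulZr 0 x 0; rewrite !scale0r. Qed.

Lemma nmul0r A (x : A) : 0 *n x = 0.
Proof. by have := nmulZl 0 0 x; rewrite !scale0r. Qed.

End Morphisms.

Section UniversalProperties.
Variable K : fieldType.
Implicit Types A B : nalg K.

Lemma universal3_eq (Vt Ed : Type) Rel A (gv : Vt -> A) (ge gs : Ed -> A) :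
  universal3 Rel gv ge gs ->
  forall B (f g : A -> B), is_morph f -> is_morph g ->
  Rel B (fun v => g (gv v)) (fun e => g (ge e)) (fun e => g (gs e)) ->
  (forall v, f (gv v) = g (gv v)) -> (forall e, f (ge e) = g (ge e)) ->
  (forall e, f (gs e) = g (gs e)) -> f =1 g.
Proof.
move=> [_ univ] B f g fm gm relg fv fe fs x.
have [phi [_ _ _ _ uniq]] := univ B _ _ _ relg.
by rewrite (uniq f) // (uniq g).
Qed.

Lemma free_product_eq (I : Type) (Ai : I -> nalg K) (P : nalg K) (iota : forall i, Ai i -> P) :
  is_free_product iota ->
  forall B (f g : P -> B), is_morph f -> is_morph g ->
  (forall i x, f (iota i x) = g (iota i x)) -> f =1 g.
Proof.
move=> [iotam univ] B f g fm gm fg y.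
have [phi [_ _ uniq]] := univ B _ (fun i => morph_comp (iotam i) gm).
by rewrite (uniq f) // (uniq g).
Qed.

Lemma morph_kernel_ideal A B (f : A -> B) : is_morph f -> is_ideal (fun x => f x = 0).
Proof.
move=> fm; split.
- exact: morph0.
- by move=> x y fx fy; rewrite (morphD fm) fx fy addr0.
- by move=> a x fx; rewrite (morphZ fm) fx scaler0.
- by move=> x y fy; rewrite fm.2 fy nmulr0.
- by move=> x y fx; rewrite fm.2 fx nmul0r.
Qed.

Lemma morph_gen_ideal A B (f : A -> B) (T : A -> Prop) :
  is_morph f -> (forall t, T t -> f t = 0) -> forall x, gen_ideal T x -> f x = 0.
Proof. by move=> fm fT x /(_ (fun y => f y = 0)); apply; [exact: morph_kernel_ideal|]. Qed.

Lemma quotient_eq (P Q : nalg K) (pi : P -> Q) J : is_quotient pi J ->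
  forall (T : Type) (f g : Q -> T), (forall p, f (pi p) = g (pi p)) -> f =1 g.
Proof. by move=> [_ pisurj _] T f g fg q; have [p <-] := pisurj q. Qed.

Lemma quotient_lift (P Q : nalg K) (pi : P -> Q) J : is_quotient pi J ->
  forall B (f : P -> B), is_morph f -> (forall p, J p -> f p = 0) ->
  exists g : Q -> B, is_morph g /\ forall p, g (pi p) = f p.
Proof.
move=> [pim pisurj piker] B f fm fJ.
pose g q := f (proj1_sig (constructive_indefinite_description _ (pisurj q))).
have gpi p : g (pi p) = f p.
  rewrite /g; case: constructive_indefinite_description => p' /= pp'.
  apply/eqP; rewrite -subr_eq0 -(morphB fm); apply/eqP/fJ/piker.
  by rewrite (morphB pim) pp' subrr.
exists g; split=> //; split.
- move=> a x y; have [p <-] := pisurj x; have [p' <-] := pisurj y.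
  by rewrite -(morphZ pim) -(morphD pim) !gpi (morphD fm) (morphZ fm).
- move=> x y; have [p <-] := pisurj x; have [p' <-] := pisurj y.
  by rewrite -pim.2 !gpi fm.2.
Qed.

End UniversalProperties.

Section SeparatedGraphRelations.
Variables (K : fieldType) (G : sep_graph) (S : Cl G -> Prop).

Lemma sig_val_inj (X : Cl G) : injective (@proj1_sig _ (fun e : E G => cls e = X)).
Proof. by case=> e he [f hf] /= ef; apply: subset_eq_compat. Qed.

Lemma exist_cls_eq (T : Type) (F : forall X : Cl G, {e : E G | cls e = X} -> T)
    (e : E G) (X : Cl G) (h : cls e = X) :
  F X (exist _ e h) = F (cls e) (exist _ e erefl).
Proof. by subst X. Qed.

Lemma lift_class_list (X : Cl G) (l : list (E G)) :
  (forall e, In e l -> cls e = X) ->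
  exists l' : list {e : E G | cls e = X}, List.map (@proj1_sig _ _) l' = l.
Proof.
elim: l => [|e l IH] inX; first by exists nil.
have [|l' <-] := IH; first by move=> f lf; apply: inX; right.
by exists (exist _ e (inX e (or_introl erefl)) :: l').
Qed.

Lemma sum_map (R : zmodType) (I J : Type) (f : I -> J) (l : list I) (F : J -> R) :
  \sum_(x <- List.map f l) F x = \sum_(y <- l) F (f y).
Proof. by elim: l => [|i l IH]; rewrite /= ?big_nil ?big_cons ?IH. Qed.

Lemma rel_AX_morph (X : Cl G) (A B : nalg K) (f : A -> B) gv ge gs :
  is_morph f -> rel_AX (X := X) S gv ge gs ->
  rel_AX (X := X) S (fun v => f (gv v)) (fun e => f (ge e)) (fun e => f (gs e)).
Proof.
move=> fm [h1 [h2 [h3 [h4 [h5 [h6 [h7 [h8 h9]]]]]]]]; have fM := fm.2.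
split; [|split; [|split; [|split; [|split; [|split; [|split; [|split]]]]]]].
- by move=> v; rewrite -fM h1.
- by move=> v w vw; rewrite -fM h2 // (morph0 fm).
- by move=> e; rewrite -fM h3.
- by move=> e; rewrite -fM h4.
- by move=> e; rewrite -fM h5.
- by move=> e; rewrite -fM h6.
- by move=> e; rewrite -fM h7.
- by move=> e e' ee'; rewrite -fM h8 // (morph0 fm).
- move=> SX l nd all; rewrite (h9 SX l nd all) morph_sum //.
  by apply: eq_bigr => e _; rewrite fM.
Qed.

Lemma rel_L_rel_AX (B : nalg K) gv (ge gs : E G -> B) :
  rel_L S gv ge gs -> forall X,
  rel_AX (X := X) S gv (fun e => ge (proj1_sig e)) (fun e => gs (proj1_sig e)).
Proof.
move=> [h1 [h2 [h3 [h4 [h5 [h6 [h7 [h8 h9]]]]]]]] X.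
split; [|split; [|split; [|split; [|split; [|split; [|split; [|split]]]]]]] => //.
- move=> [e he] [f hf] ef; apply: h8; first by rewrite he hf.
  by move=> /= eqef; apply/ef/sig_val_inj.
- move=> SX l nd all; rewrite (h9 X SX (List.map (@proj1_sig _ _) l)) ?sum_map //.
    by apply: NoDup_map_NoDup_ForallPairs => // ? ? _ _; apply: sig_val_inj.
  move=> e; split; first by case/in_map_iff => [[f hf]] /= [<- _].
  by move=> he; apply/in_map_iff; exists (exist _ e he).
Qed.

(* All the A_X-relations share the same vertex map gv: this is where the
   identification v_X = v_Y is used. *)
Lemma rel_AX_rel_L (B : nalg K) (X0 : Cl G) gv
    (ge gs : forall X, {e : E G | cls e = X} -> B) :
  (forall X, rel_AX (X := X) S gv (ge X) (gs X)) ->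
  rel_L S gv (fun e => ge (cls e) (exist _ e erefl))
             (fun e => gs (cls e) (exist _ e erefl)).
Proof.
move=> rel; have r e := rel (cls e); have [h1 [h2 _]] := rel X0.
split; [|split; [|split; [|split; [|split; [|split; [|split; [|split]]]]]]] => //.
- by move=> e; have [_ [_ [_ [h _]]]] := r e; exact: (h (exist _ e erefl)).
- by move=> e; have [_ [_ [h _]]] := r e; exact: (h (exist _ e erefl)).
- by move=> e; have [_ [_ [_ [_ [h _]]]]] := r e; exact: (h (exist _ e erefl)).
- by move=> e; have [_ [_ [_ [_ [_ [h _]]]]]] := r e; exact: (h (exist _ e erefl)).
- by move=> e; have [_ [_ [_ [_ [_ [_ [h _]]]]]]] := r e; exact: (h (exist _ e erefl)).
- move=> e f ef nef; rewrite -(exist_cls_eq ge (esym ef)).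
  have [_ [_ [_ [_ [_ [_ [_ [h _]]]]]]]] := r e; apply: h.
  by move=> /(congr1 (@proj1_sig _ _)).
- move=> X SX l nd inl; have [_ [_ [_ [_ [_ [_ [_ [_ h9]]]]]]]] := rel X.
  have [l' ll'] := lift_class_list (l := l) (fun e => proj1 (inl e)).
  rewrite (h9 SX l'); last first.
  + case=> e he; have : In e (List.map (@proj1_sig _ _) l') by rewrite ll'; apply/inl.
    by case/in_map_iff => f [fe lf]; rewrite -(sig_val_inj (x2 := exist _ e he) fe).
  + by apply: (NoDup_map_inv (@proj1_sig _ _)); rewrite ll'.
  rewrite -ll' sum_map; apply: eq_bigr => -[e he] _ /=.
  by rewrite (exist_cls_eq ge) (exist_cls_eq gs).
Qed.

End SeparatedGraphRelations.

Lemma free_product_lift_rel_L (K : fieldType) (G : sep_graph) (S : Cl G -> Prop)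
    (L : nalg K) (lv : V G -> L) (le ls : E G -> L) (AX : Cl G -> nalg K)
    (axv : forall X, V G -> AX X) (axe axs : forall X, {e : E G | cls e = X} -> AX X)
    (P : nalg K) (iota : forall X, AX X -> P) :
  rel_L S lv le ls ->
  (forall X, universal3 (@rel_AX K G S X) (axv X) (axe X) (axs X)) ->
  is_free_product iota ->
  exists Psi : P -> L, [/\ is_morph Psi,
    forall X v, Psi (iota X (axv X v)) = lv v,
    forall X e, Psi (iota X (axe X e)) = le (proj1_sig e) &
    forall X e, Psi (iota X (axs X e)) = ls (proj1_sig e)].
Proof.
move=> relL hAX [_ univP].
have fXex X : exists f : AX X -> L, [/\ is_morph f,
    forall v, f (axv X v) = lv v, forall e, f (axe X e) = le (proj1_sig e) &
    forall e, f (axs X e) = ls (proj1_sig e)].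
  by have [f [? ? ? ? _]] := (hAX X).2 L _ _ _ (rel_L_rel_AX relL X); exists f.
have [fX fXP] := non_dep_dep_functional_choice choice _ _ fXex.
have fXm X : is_morph (fX X) by case: (fXP X).
have [Psi [Psim PsiE _]] := univP L fX fXm.
by exists Psi; split=> // X ?; rewrite PsiE; case: (fXP X).
Qed.

Theorem proposition4p4 (K : fieldType) (G : sep_graph) (S : Cl G -> Prop)
  (hS : forall X, S X -> exists l : list (E G), NoDup l /\ (forall e, In e l <-> cls e = X))
  (hC : inhabited (Cl G))
  (L : nalg K) (lv : V G -> L) (le ls : E G -> L)
  (hL : universal3 (@rel_L K G S) lv le ls)
  (AX : Cl G -> nalg K) (axv : forall X, V G -> AX X)
  (axe axs : forall X, {e : E G | cls e = X} -> AX X)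
  (hAX : forall X, universal3 (@rel_AX K G S X) (axv X) (axe X) (axs X))
  (P : nalg K) (iota : forall X, AX X -> P) (hP : is_free_product iota)
  (Q : nalg K) (pi : P -> Q)
  (hQ : is_quotient pi (gen_ideal (fun p : P =>
          exists (X Y : Cl G) (v : V G), p = iota X (axv X v) - iota Y (axv Y v)))) :
  exists phi : L -> Q,
    [/\ is_morph phi, bijective phi,
        (forall e : E G, phi (le e) =
           pi (iota (cls e) (axe (cls e) (exist (fun f => cls f = cls e) e erefl)))),
        (forall e : E G, phi (ls e) =
           pi (iota (cls e) (axs (cls e) (exist (fun f => cls f = cls e) e erefl)))) &
        (forall (v : V G) (X : Cl G), phi (lv v) = pi (iota X (axv X v)))].
Proof.
have [X0] := hC; have [pim _ piker] := hQ; have [iotam _] := hP.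
have piiotam X := morph_comp (iotam X) pim.
pose qv v := pi (iota X0 (axv X0 v)).
have qvE X v : pi (iota X (axv X v)) = qv v.
  apply/eqP; rewrite -subr_eq0 -(morphB pim); apply/eqP/piker => J _; apply.
  by exists X, X0, v.
have relQ X := rel_AX_morph (piiotam X) (hAX X).1.
have relQv X : rel_AX S qv (fun e => pi (iota X (axe X e))) (fun e => pi (iota X (axs X e))).
  by rewrite -(functional_extensionality _ _ (qvE X)); exact: relQ.
have [phi [phim phiv phie phis _]] := hL.2 Q _ _ _ (rel_AX_rel_L X0 relQv).
have [Psi [Psim Psiv Psie Psis]] := free_product_lift_rel_L hL.1 hAX hP.
have Psi_vertex t : (exists X Y v, t = iota X (axv X v) - iota Y (axv Y v)) -> Psi t = 0.
  by move=> [X [Y [v ->]]]; rewrite (morphB Psim) !Psiv subrr.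
have [psi [psim psiE]] := quotient_lift hQ Psim (morph_gen_ideal Psim Psi_vertex).
exists phi; split=> // [|v X]; last by rewrite phiv qvE.
exists psi.
- apply: (universal3_eq hL (morph_comp phim psim) (morph_id _) hL.1) => [v|e|e].
  + by rewrite phiv -(qvE X0) psiE Psiv.
  + by rewrite phie psiE Psie.
  + by rewrite phis psiE Psis.
- have phipsim := morph_comp psim phim.
  apply: (quotient_eq hQ) => p; apply: (free_product_eq hP (morph_comp pim phipsim) pim) => X.
  apply: (universal3_eq (hAX X) (morph_comp (piiotam X) phipsim) (piiotam X) (relQ X))
    => [v|[e he]|[e he]] /=.
  + by rewrite psiE Psiv phiv qvE.
  + by rewrite psiE Psie phie; exact: esym (exist_cls_eq (fun X x => pi (iota X (axe X x))) he).
  + by rewrite psiE Psis phis; exact: esym (exist_cls_eq (fun X x => pi (iota X (axs X x))) he).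
Qed.
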